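(* In the stochastic-follower setting, consider the greedy algorithm that at each round $t$ commits to $\mathbf{x}_t\in\arg\max_{\mathbf{x}\in\mathcal{E}_{\mathbf{z}_t}}\sum_{i=1}^K\widehat{p}_t(f_t=\alpha^{(i)})\,u(\mathbf{z}_t,\mathbf{x},b_{\alpha^{(i)}}(\mathbf{z}_t,\mathbf{x}))$, where $\widehat{p}_1(f=\alpha^{(i)})=\frac1K$ and $\widehat{p}_{t+1}(f=\alpha^{(i)})=\frac1t\sum_{\tau=1}^t\mathbb{1}\{f_\tau=\alpha^{(i)}\}$ for all $i\in[K]$ (i.e. the estimated distribution of the follower best response to $(\mathbf{z},\mathbf{x})$ is induced by the empirical distribution of observed types). Then its expected contextual Stackelberg regret satisfies $\mathbb{E}[R(T)]=O\big(K\sqrt{T\log T}\big)$.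
   Context: Game: finite leader actions $\mathcal{A}$, finite follower actions $\mathcal{A}_f$, contexts $\mathcal{Z}\subseteq\mathbb{R}^d$, follower types $\alpha^{(1)},\ldots,\alpha^{(K)}$ ($K\le T$) with known utilities $u_{\alpha^{(i)}}:\mathcal{Z}\times\mathcal{A}\times\mathcal{A}_f\to[0,1]$, known leader utility $u:\mathcal{Z}\times\mathcal{A}\times\mathcal{A}_f\to[0,1]$, mixed strategies $\mathbf{x}\in\Delta(\mathcal{A})$, $u(\mathbf{z},\mathbf{x},a_f)=\sum_{a_l}\mathbf{x}[a_l]u(\mathbf{z},a_l,a_f)$; best response $b_f(\mathbf{z},\mathbf{x})\in\arg\max_{a_f}\sum_{a_l}\mathbf{x}[a_l]u_f(\mathbf{z},a_l,a_f)$, ties broken by a fixed known ordering. Best-response regions $\mathcal{X}_{\mathbf{z}}(\sigma)=\{\mathbf{x}:b_{\alpha^{(i)}}(\mathbf{z},\mathbf{x})=\sigma(\alpha^{(i)})\ \forall i\}$ for $\sigma:\{\alpha^{(1)},\dots,\alpha^{(K)}\}\to\mathcal{A}_f$. $\mathcal{E}_{\mathbf{z}}$ is a set of $\delta$-approximate extreme points with $\delta\le 1/T$: for every $\sigma$ with $\mathcal{X}_{\mathbf{z}}(\sigma)\neq\emptyset$ and every extreme point $\mathbf{x}$ of $\mathrm{cl}(\mathcal{X}_{\mathbf{z}}(\sigma))$, either $\mathbf{x}\in\mathcal{X}_{\mathbf{z}}(\sigma)$ and $\mathbf{x}\in\mathcal{E}_{\mathbf{z}}$, or some $\mathbf{x}'\in\mathcal{E}_{\mathbf{z}}\cap\mathcal{X}_{\mathbf{z}}(\sigma)$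 has $\|\mathbf{x}'-\mathbf{x}\|_1\le\delta$. Stochastic-follower setting: $f_1,\ldots,f_T$ i.i.d. from an unknown distribution $\mathcal{F}$ over types; contexts chosen by a possibly adaptive adversary knowing $\mathcal{F}$, the algorithm and $f_1,\dots,f_{t-1}$ (not $f_t$) when choosing $\mathbf{z}_t$; the leader observes $f_t$ after round $t$. Expected regret $\mathbb{E}[R(T)]=\mathbb{E}_{f_1,\ldots,f_T\sim\mathcal{F}}\big[\sum_t u(\mathbf{z}_t,\pi^*(\mathbf{z}_t),b_{f_t}(\mathbf{z}_t,\pi^*(\mathbf{z}_t)))-u(\mathbf{z}_t,\mathbf{x}_t,b_{f_t}(\mathbf{z}_t,\mathbf{x}_t))\big]$ with $\pi^*$ the optimal policy (map $\mathcal{Z}\to\Delta(\mathcal{A})$) given $\mathbf{z}_1,\ldots,\mathbf{z}_T$ and $\mathcal{F}$. *)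

From mathcomp Require Import all_boot all_order all_algebra.
From mathcomp Require Import reals exp.
Set Implicit Arguments. Unset Strict Implicit. Unset Printing Implicit Defensive.
Import Order.TTheory GRing.Theory Num.Theory.
Local Open Scope ring_scope.

Section GameDefs.
Variables (R : realType) (d : nat) (A Af : finType).

Notation ctx := 'rV[R]_d.
Notation strat := {ffun A -> R}.

Definition mixed (x : strat) : Prop :=
  (forall a, 0 <= x a) /\ \sum_(a : A) x a = 1.

Definition Uexp (u : ctx -> A -> Af -> R) (z : ctx) (x : strat) (af : Af) : R :=
  \sum_(al : A) x al * u z al af.

(* Best response of a follower with utility uf: the first maximizer in the
   fixed tie-breaking order tb (a listing of Af); af0 is an irrelevant default
   (never used when tb lists all of Af, which is nonempty). *)
Definition br (tb : seq Af) (af0 : Af) (uf : ctx -> A -> Af -> R)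
    (z : ctx) (x : strat) : Af :=
  head af0 [seq a <- tb | [forall a' : Af, Uexp uf z x a' <= Uexp uf z x a]].

Definition l1 (x y : strat) : R := \sum_(a : A) `|x a - y a|.

Definition closure_l1 (S : strat -> Prop) (x : strat) : Prop :=
  forall e : R, 0 < e -> exists y, S y /\ l1 x y < e.

Definition extreme_point (C : strat -> Prop) (x : strat) : Prop :=
  C x /\ forall y w : strat, forall t : R, C y -> C w -> 0 < t -> t < 1 ->
    (forall a, x a = t * y a + (1 - t) * w a) -> y = w.

End GameDefs.

Section Regions.
Variables (R : realType) (d : nat) (A Af : finType) (K : nat).
Variables (tb : seq Af) (af0 : Af) (uf : 'I_K -> 'rV[R]_d -> A -> Af -> R).

Definition BRregion (z : 'rV[R]_d) (sigma : 'I_K -> Af) (x : {ffun A -> R}) : Prop :=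
  mixed x /\ forall i : 'I_K, br tb af0 (uf i) z x = sigma i.

Definition approx_extreme_points (delta : R) (z : 'rV[R]_d)
    (E : seq {ffun A -> R}) : Prop :=
  forall sigma : 'I_K -> Af,
    (exists x, BRregion z sigma x) ->
    forall x, extreme_point (closure_l1 (BRregion z sigma)) x ->
      (BRregion z sigma x /\ x \in E) \/
      (exists x', [/\ x' \in E, BRregion z sigma x' & l1 x' x <= delta]).

Definition phat (h : seq 'I_K) (i : 'I_K) : R :=
  if h is [::] then (K%:R)^-1 else (count (pred1 i) h)%:R / (size h)%:R.

Definition greedy_obj (u : 'rV[R]_d -> A -> Af -> R) (h : seq 'I_K)
    (z : 'rV[R]_d) (x : {ffun A -> R}) : R :=
  \sum_(i < K) phat h i * Uexp u z x (br tb af0 (uf i) z x).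

Definition exp_val (u : 'rV[R]_d -> A -> Af -> R) (F : 'I_K -> R)
    (z : 'rV[R]_d) (x : {ffun A -> R}) : R :=
  \sum_(i < K) F i * Uexp u z x (br tb af0 (uf i) z x).

(* realized regret on the type sequence s, for the algorithm alg (a function of
   the past types and the current context), the adaptive adversary adv
   (a function of the past types) and the benchmark policy pistar *)
Definition regret (T : nat) (u : 'rV[R]_d -> A -> Af -> R)
    (alg : seq 'I_K -> 'rV[R]_d -> {ffun A -> R})
    (adv : seq 'I_K -> 'rV[R]_d)
    (pistar : 'rV[R]_d -> {ffun A -> R}) (s : T.-tuple 'I_K) : R :=
  \sum_(t < T)
    let h := take t s in
    let z := adv h in
    let f := tnth s t in
    let x := alg h z in
    (Uexp u z (pistar z) (br tb af0 (uf f) z (pistar z))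
     - Uexp u z x (br tb af0 (uf f) z x)).

Definition expected_regret (T : nat) (F : 'I_K -> R) (u : 'rV[R]_d -> A -> Af -> R)
    (alg : seq 'I_K -> 'rV[R]_d -> {ffun A -> R})
    (adv : seq 'I_K -> 'rV[R]_d)
    (pistar : 'rV[R]_d -> {ffun A -> R}) : R :=
  \sum_(s : T.-tuple 'I_K) (\prod_(t < T) F (tnth s t)) * regret u alg adv pistar s.

End Regions.

(* Within a best-response region the leader's expected utility is linear, so
   over the closure of the region (a polytope) it is maximised at an extreme
   point, which the delta-approximate extreme points approximate up to
   delta <= 1/T.  Hence, in expectation over the current type, the greedy choice
   for the empirical distribution p_t loses at most 1/T + 2 |p_t - F|_1 against
   any mixed benchmark.
   The empirical frequency of type i after t rounds has variance
   F i (1 - F i) / t, so by AM-GM E |p_t i - F i| <= (F i / (t eps) + eps) / 2;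
   summing over types and rounds, with the harmonic sum bounded by 1 + ln T
   and eps = sqrt (T ln T) / T, gives 9 K sqrt (T ln T). *)

From Pilot Require Import Defs.
From mathcomp Require Import all_boot all_order all_algebra.
From mathcomp Require Import boolp reals exp.
From mathcomp Require Import ring lra.
Import Order.TTheory GRing.Theory Num.Theory.
Local Open Scope ring_scope.
Set Implicit Arguments. Unset Strict Implicit. Unset Printing Implicit Defensive.

Section IidMean.
Variables (R : realType) (I : finType) (F : I -> R).
Hypothesis F_ge0 : forall i, 0 <= F i.
Hypothesis F_sum1 : \sum_i F i = 1.

Definition iid_mean n (G : seq I -> R) : R :=
  \sum_(s : n.-tuple I) (\prod_(t < n) F (tnth s t)) * G s.

Lemma eq_iid_mean n (G H : seq I -> R) :
  (forall s : n.-tuple I, G s = H s) -> iid_mean n G = iid_mean n H.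
Proof. by move=> eGH; apply: eq_bigr => s _; rewrite eGH. Qed.

Lemma ler_iid_mean n (G H : seq I -> R) :
  (forall s : n.-tuple I, G s <= H s) -> iid_mean n G <= iid_mean n H.
Proof.
move=> leGH; apply: ler_sum => s _; apply: ler_wpM2l (leGH s).
by apply: prodr_ge0 => t _.
Qed.

Lemma iid_meanD n (G H : seq I -> R) :
  iid_mean n (fun s => G s + H s) = iid_mean n G + iid_mean n H.
Proof. by rewrite /iid_mean -big_split; apply: eq_bigr => s _; rewrite mulrDr. Qed.

Lemma iid_meanZ n c (G : seq I -> R) :
  iid_mean n (fun s => c * G s) = c * iid_mean n G.
Proof. by rewrite /iid_mean big_distrr; apply: eq_bigr => s _; rewrite mulrCA. Qed.

Lemma iid_mean_sum n (J : finType) (G : J -> seq I -> R) :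
  iid_mean n (fun s => \sum_j G j s) = \sum_j iid_mean n (G j).
Proof. by rewrite /iid_mean exchange_big; apply: eq_bigr => s _; rewrite big_distrr. Qed.

Lemma iid_mean0 (G : seq I -> R) : iid_mean 0 G = G [::].
Proof.
rewrite /iid_mean (big_pred1 [tuple]) => [|s]; last exact/esym/eqP/tuple0.
by rewrite big_ord0 mul1r.
Qed.

Lemma iid_meanS n (G : seq I -> R) :
  iid_mean n.+1 G = \sum_i F i * iid_mean n (fun s => G (i :: s)).
Proof.
rewrite /iid_mean (reindex (fun p : I * n.-tuple I => [tuple of p.1 :: p.2])) /=.
  rewrite -(pair_big xpredT xpredT (fun i (s : n.-tuple I) =>
    (\prod_(t < n.+1) F (tnth [tuple of i :: s] t)) * G (i :: s))) /=.
  apply: eq_bigr => i _; rewrite big_distrr /=; apply: eq_bigr => s _.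
  by rewrite big_ord_recl mulrA; congr (_ * _ * _); apply: eq_bigr => t _;
    rewrite !(tnth_nth i).
exists (fun s : n.+1.-tuple I => (thead s, [tuple of behead s])) => [[i s] _|s _].
  by congr pair; apply: val_inj.
by rewrite [RHS]tuple_eta.
Qed.

Lemma iid_mean_rcons n (G : seq I -> R) :
  iid_mean n.+1 G = iid_mean n (fun s => \sum_i F i * G (rcons s i)).
Proof.
elim: n G => [|n IHn] G; first by rewrite iid_meanS iid_mean0; under eq_bigr do rewrite iid_mean0.
by rewrite iid_meanS [RHS]iid_meanS; under eq_bigr do rewrite IHn.
Qed.

Lemma iid_mean_cst n c : iid_mean n (fun _ => c) = c.
Proof.
elim: n => [|n IHn]; first by rewrite iid_mean0.
by rewrite iid_meanS; under eq_bigr do rewrite IHn; rewrite -big_distrl /= F_sum1 mul1r.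
Qed.

Lemma iid_mean_take m n (G : seq I -> R) :
  (m <= n)%N -> iid_mean n (fun s => G (take m s)) = iid_mean m G.
Proof.
elim: n => [|n IHn]; first by rewrite leqn0 => /eqP->; rewrite !iid_mean0.
rewrite leq_eqVlt => /predU1P[->|lt_mn].
  by apply: eq_iid_mean => s; rewrite take_oversize // size_tuple.
rewrite iid_mean_rcons -IHn //; apply: eq_iid_mean => s.
under eq_bigr do rewrite -cats1 takel_cat ?size_tuple //.
by rewrite -big_distrl /= F_sum1 mul1r.
Qed.

Lemma iid_mean_nth t n i0 (G : seq I -> I -> R) : (t < n)%N ->
  iid_mean n (fun s => G (take t s) (nth i0 s t)) =
  iid_mean t (fun s => \sum_i F i * G s i).
Proof.
move=> lt_tn; pose H s := G (take t s) (nth i0 s t).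
rewrite (eq_iid_mean (H := fun s => H (take t.+1 s))) => [|s].
  by rewrite iid_mean_take // iid_mean_rcons; apply: eq_iid_mean => s; apply: eq_bigr => i _;
    rewrite /H -cats1 take_size_cat ?size_tuple // nth_cat size_tuple ltnn subnn.
by rewrite /H take_takel ?nth_take.
Qed.

Lemma iid_mean_count_var n i :
  iid_mean n (fun s => ((count_mem i s)%:R - (size s)%:R * F i) ^+ 2) =
  n%:R * (F i * (1 - F i)).
Proof.
have F_rest : \sum_(k | k != i) F k = 1 - F i.
  by rewrite -F_sum1 [in RHS](bigD1 i) //= addrAC subrr add0r.
elim: n => [|n IHn]; first by rewrite iid_mean0 /= mul0r subrr expr0n !mul0r.
rewrite iid_mean_rcons.
set X := fun s : seq I => (count_mem i s)%:R - (size s)%:R * F i.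
rewrite (eq_iid_mean (H := fun s => X s ^+ 2 + F i * (1 - F i))) => [|s].
  by rewrite iid_meanD iid_mean_cst IHn -nat1r; ring.
rewrite (bigD1 i) //= -cats1 count_cat size_cat /= eqxx.
under eq_bigr => k /negbTE nki do
  rewrite -cats1 count_cat size_cat /= nki.
rewrite -big_distrl /= F_rest /X !natrD /=; ring.
Qed.

End IidMean.

Lemma ler_normr_amgm (R : realFieldType) (x e : R) : 0 < e -> `|x| <= (x ^+ 2 / e + e) / 2.
Proof.
move=> e_gt0; rewrite -[x ^+ 2]real_normK ?num_real //.
have : 0 <= (`|x| - e) ^+ 2 / (2 * e) by rewrite divr_ge0 ?sqr_ge0 // mulr_ge0 // ltW.
suff -> : (`|x| ^+ 2 / e + e) / 2 = `|x| + (`|x| - e) ^+ 2 / (2 * e) by lra.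
by field; rewrite gt_eqF.
Qed.

Section EmpiricalFrequency.
Variables (R : realType) (K : nat) (F : 'I_K -> R).
Hypothesis F_ge0 : forall i, 0 <= F i.
Hypothesis F_sum1 : \sum_i F i = 1.

Lemma phat_tuple t (s : t.-tuple 'I_K) i : (0 < t)%N ->
  phat R s i = (count_mem i s)%:R / t%:R.
Proof. by case: t s => // t [[|j s] //= /eqP <-]. Qed.

Lemma iid_mean_phat_dev t eps i : (0 < t)%N -> 0 < eps ->
  iid_mean F t (fun s => `|phat R s i - F i|) <= (F i / (t%:R * eps) + eps) / 2.
Proof.
move=> t_gt0 eps_gt0; have tR_gt0 : (0 : R) < t%:R by rewrite ltr0n.
pose c := (2 * t%:R ^+ 2 * eps)^-1.
apply: le_trans (_ : iid_mean F t
    (fun s => c * ((count_mem i s)%:R - (size s)%:R * F i) ^+ 2 + eps / 2) <= _).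
  apply: ler_iid_mean => // s; rewrite phat_tuple // size_tuple.
  apply: le_trans (ler_normr_amgm _ eps_gt0) _; rewrite le_eqVlt; apply/orP; left.
  by apply/eqP; rewrite /c; field; rewrite !gt_eqF.
rewrite iid_meanD iid_meanZ iid_mean_count_var // iid_mean_cst //.
have -> : c * (t%:R * (F i * (1 - F i))) = F i * (1 - F i) / (t%:R * eps) / 2.
  by rewrite /c; field; rewrite !gt_eqF.
have : F i * (1 - F i) / (t%:R * eps) <= F i / (t%:R * eps).
  by rewrite ler_pM2r ?invr_gt0 ?mulr_gt0 //; have := F_ge0 i; nra.
lra.
Qed.

Lemma iid_mean_phat_l1_dev t eps : 0 < eps ->
  iid_mean F t (fun s => \sum_i `|phat R s i - F i|) <=
  2 * (t == 0)%:R + (t%:R^-1 / eps + K%:R * eps) / 2.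
Proof.
move=> eps_gt0; have KR_ge0 : (0 : R) <= K%:R by [].
case: (posnP t) => [->|t_gt0]; rewrite ?mulr0 ?add0r iid_mean_sum.
  rewrite invr0 mul0r add0r mulr1; under eq_bigr do rewrite iid_mean0.
  apply: le_trans (_ : \sum_i (K%:R^-1 + F i) <= _).
    by apply: ler_sum => i _; rewrite (le_trans (ler_normB _ _)) // !ger0_norm ?invr_ge0.
  rewrite big_split /= F_sum1 sumr_const card_ord -mulr_natr.
  have : K%:R^-1 * K%:R <= 1 :> R by case: (eqVneq (K%:R : R) 0) => [->|/mulVf->]; rewrite ?mulr0.
  have : 0 <= K%:R * eps by rewrite mulr_ge0 // ltW.
  lra.
apply: le_trans (_ : \sum_i (F i / (t%:R * eps) + eps) / 2 <= _).
  by apply: ler_sum => i _; apply: iid_mean_phat_dev.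
rewrite -big_distrl big_split /= -big_distrl /= F_sum1 sumr_const card_ord.
by rewrite mul1r invfM mulr_natl.
Qed.

End EmpiricalFrequency.

Lemma not_extreme_pointP (R : realType) (A : finType) (C : {ffun A -> R} -> Prop) x :
  C x -> ~ extreme_point C x ->
  exists y w t, [/\ C y, C w, 0 < t < 1, forall a, x a = t * y a + (1 - t) * w a & y <> w].
Proof.
move=> Cx not_ext; apply: contrapT => no_split; apply: not_ext; split=> // y w t Cy Cw t0 t1 ex.
apply: contrapT => neq_yw; apply: no_split; exists y, w, t.
by split; rewrite ?t0.
Qed.

Section Polytope.
Variables (R : realType) (A J : finType) (g : J -> {ffun A -> R}).

Definition dot (c x : {ffun A -> R}) : R := \sum_a x a * c a.

Lemma dot_comb c (x y z : {ffun A -> R}) al be : (forall a, z a = al * x a + be * y a) ->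
  dot c z = al * dot c x + be * dot c y.
Proof.
by move=> ez; rewrite /dot !big_distrr -big_split; apply: eq_bigr => a _; rewrite ez /=; ring.
Qed.

Lemma dotB (c x y : {ffun A -> R}) : dot c (x - y) = dot c x - dot c y.
Proof. by rewrite (@dot_comb _ x y _ 1 (-1)) => [|a]; rewrite ?ffunE; ring. Qed.

Lemma dotN (c x : {ffun A -> R}) : dot c (- x) = - dot c x.
Proof. by rewrite -sub0r dotB /dot big1 ?sub0r // => a _; rewrite ffunE mul0r. Qed.

Lemma sum_dot1 (x : {ffun A -> R}) : \sum_a x a = dot [ffun=> 1] x.
Proof. by apply: eq_bigr => a _; rewrite ffunE mulr1. Qed.

Lemma dotB_le_l1 (c x y : {ffun A -> R}) : (forall a, `|c a| <= 1) -> dot c x - dot c y <= l1 x y.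
Proof.
move=> c_le1; rewrite -dotB; apply: ler_sum => a _; rewrite ffunE.
by rewrite (le_trans (ler_norm _)) // normrM ffunE ler_piMr.
Qed.

Lemma l1C (x y : {ffun A -> R}) : l1 x y = l1 y x.
Proof. by apply: eq_bigr => a _; rewrite distrC. Qed.

Definition polytope (x : {ffun A -> R}) : Prop :=
  \sum_a x a = 1 /\ forall j, dot (g j) x <= 0.

Definition slack (x : {ffun A -> R}) : {set J} := [set j | dot (g j) x < 0].

Lemma polytope_tight_split (p y w : {ffun A -> R}) t j :
  polytope y -> polytope w -> 0 < t < 1 -> (forall a, p a = t * y a + (1 - t) * w a) ->
  dot (g j) p = 0 -> dot (g j) y = 0 /\ dot (g j) w = 0.
Proof.
move=> [_ Py] [_ Pw] /andP[t0 t1] ep; rewrite (dot_comb _ ep) => p0.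
have := Py j; have := Pw j; nra.
Qed.

Hypothesis bounded :
  forall v : {ffun A -> R}, \sum_a v a = 0 -> v != 0 -> exists j, 0 < dot (g j) v.

(* Move from [p] along [v] or [-v] until one more constraint becomes tight. *)
Lemma polytope_push (L p v : {ffun A -> R}) : polytope p -> \sum_a v a = 0 -> v != 0 ->
  (forall j, dot (g j) p = 0 -> dot (g j) v = 0) ->
  exists2 p', polytope p' & (#|slack p'| < #|slack p|)%N /\ dot L p <= dot L p'.
Proof.
move=> [sum_p Pp]; wlog Lv : v / 0 <= dot L v => [wlog_v sum_v v_neq0 tight|].
  have [Lv|Lv] := lerP 0 (dot L v); first exact: wlog_v Lv sum_v v_neq0 tight.
  apply: (wlog_v (- v)); first by rewrite dotN oppr_ge0 ltW.
  - by rewrite sum_dot1 dotN -sum_dot1 sum_v oppr0.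
  - by rewrite oppr_eq0.
  - by move=> j /tight; rewrite dotN => ->; rewrite oppr0.
move=> sum_v v_neq0 tight; have [j0 v_j0] := bounded sum_v v_neq0.
have p_lt0 j : 0 < dot (g j) v -> dot (g j) p < 0.
  by move=> v_j; rewrite lt_neqAle Pp andbT; apply: contraTneq v_j => /tight->; rewrite ltxx.
pose ratio j := - dot (g j) p / dot (g j) v.
have [j1 v_j1 min_j1] := @arg_minP _ _ _ j0 (fun j => 0 < dot (g j) v) ratio v_j0.
pose lam := ratio j1.
have lam_ge0 : 0 <= lam by rewrite divr_ge0 ?oppr_ge0 ?ltW ?p_lt0.
pose p' : {ffun A -> R} := [ffun a => 1 * p a + lam * v a].
have dot_p' c : dot c p' = dot c p + lam * dot c v.
  by rewrite (@dot_comb c p v p' 1 lam) ?mul1r // => a; rewrite ffunE.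
exists p'; [split | split].
- by rewrite sum_dot1 dot_p' -!sum_dot1 sum_p sum_v mulr0 addr0.
- move=> j; rewrite dot_p'; have [v_j|v_j] := ltrP 0 (dot (g j) v).
    by have := min_j1 j v_j; rewrite -/lam /ratio ler_pdivlMr //; lra.
  by have := Pp j; have := mulr_ge0_le0 lam_ge0 v_j; lra.
- apply: proper_card; apply/properP; split.
    apply/subsetP => j; rewrite !inE dot_p' => lt0.
    rewrite lt_neqAle Pp andbT; apply: contraTneq lt0 => /[dup] /tight->->.
    by rewrite mulr0 addr0 ltxx.
  exists j1; rewrite !inE ?p_lt0 // dot_p' /lam /ratio divfK ?gt_eqF //.
  by rewrite addrN ltxx.
- by rewrite dot_p' lerDl mulr_ge0.
Qed.

Lemma exists_extreme_point_ge (L p : {ffun A -> R}) : polytope p ->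
  exists x, extreme_point polytope x /\ dot L p <= dot L x.
Proof.
move: {2}#|slack p|.+1 (ltnSn #|slack p|) => n; elim: n p => // n IHn p lt_n Pp.
have [ext|not_ext] := pselect (extreme_point polytope p); first by exists p.
have [y [w [t [Py Pw t01 ep neq_yw]]]] := not_extreme_pointP Pp not_ext.
have [|||p' Pp' [lt_slack le_p']] := @polytope_push L p (y - w) Pp.
- by rewrite sum_dot1 dotB -!sum_dot1 (proj1 Py) (proj1 Pw) subrr.
- by rewrite subr_eq0; apply/eqP.
- by move=> j /(polytope_tight_split Py Pw t01 ep) [y0 w0]; rewrite dotB y0 w0 subrr.
have [x [ext_x le_x]] := IHn p' (leq_trans lt_slack lt_n) Pp'.
by exists x; split => //; apply: le_trans le_x.
Qed.

End Polytope.

Section HeadFilter.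
Variables (T : eqType) (x0 : T) (P : pred T).

Lemma before_head_filter s b :
  (index b s < index (head x0 [seq x <- s | P x]) s)%N -> ~~ P b.
Proof.
elim: s => //= c s IHs; case Pc: (P c) => /=; first by rewrite eqxx.
case: eqP => [<-|_]; first by rewrite Pc.
by case: eqP => // _; rewrite ltnS; apply: IHs.
Qed.

Lemma head_filter_eq s a : a \in s -> P a ->
  (forall b, (index b s < index a s)%N -> ~~ P b) -> head x0 [seq x <- s | P x] = a.
Proof.
elim: s => //= c s IHs; rewrite in_cons eq_sym => /predU1P[<-|a_s] Pa before_a.
  by rewrite Pa.
case: ifP => Pc /=.
  by apply: contraTeq Pc => neq_ca; apply: before_a => /=; rewrite eqxx (negPf neq_ca).
apply: IHs => // b lt_ba; case: (eqVneq c b) => [<-|neq_cb]; first by rewrite Pc.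
have [eq_ca|neq_ca] := eqVneq c a; first by rewrite eq_ca Pa in Pc.
by apply: before_a; rewrite (negPf neq_cb) (negPf neq_ca).
Qed.

End HeadFilter.

Section BestResponse.
Variables (R : realType) (d : nat) (A Af : finType) (tb : seq Af) (af0 : Af).
Hypothesis tb_enum : perm_eq tb (enum Af).

Lemma Uexp_dot (uu : 'rV[R]_d -> A -> Af -> R) z x b :
  Uexp uu z x b = dot [ffun a => uu z a b] x.
Proof. by apply: eq_bigr => a _; rewrite ffunE. Qed.

Lemma Uexp_comb (uu : 'rV[R]_d -> A -> Af -> R) z (x y w : {ffun A -> R}) al be b :
  (forall a, x a = al * y a + be * w a) ->
  Uexp uu z x b = al * Uexp uu z y b + be * Uexp uu z w b.
Proof. by move=> ex; rewrite !Uexp_dot; apply: dot_comb. Qed.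

Lemma br_mem (uu : 'rV[R]_d -> A -> Af -> R) z x :
  br tb af0 uu z x \in [seq b <- tb | [forall b', Uexp uu z x b' <= Uexp uu z x b]].
Proof.
have [b _ b_max] := @arg_maxP _ _ _ af0 xpredT (Uexp uu z x) isT.
have : b \in [seq b <- tb | [forall b', Uexp uu z x b' <= Uexp uu z x b]].
  by rewrite mem_filter (perm_mem tb_enum) mem_enum andbT; apply/forallP => b'; apply: b_max.
by rewrite /br; case: [seq _ <- _ | _] => //= c s _; rewrite mem_head.
Qed.

Lemma br_max (uu : 'rV[R]_d -> A -> Af -> R) z x b :
  Uexp uu z x b <= Uexp uu z x (br tb af0 uu z x).
Proof. by have := br_mem uu z x; rewrite mem_filter => /andP[/forallP]. Qed.

Lemma before_br (uu : 'rV[R]_d -> A -> Af -> R) z x b :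
  (index b tb < index (br tb af0 uu z x) tb)%N -> Uexp uu z x b < Uexp uu z x (br tb af0 uu z x).
Proof.
move/before_head_filter/forallPn => [b' lt_b']; rewrite -ltNge in lt_b'.
exact: lt_le_trans lt_b' (br_max _ _ _ _).
Qed.

End BestResponse.

Lemma closure_l1_dot_le (R : realType) (A : finType) (S : {ffun A -> R} -> Prop)
    (c x : {ffun A -> R}) r :
  (forall a, `|c a| <= 1) -> (forall y, S y -> dot c y <= r) -> closure_l1 S x -> dot c x <= r.
Proof.
move=> c_le1 S_le cl_x; rewrite leNgt; apply/negP => lt_rx.
have := cl_x (dot c x - r); rewrite subr_gt0 => /(_ lt_rx) [y [Sy lt_xy]].
by have := S_le y Sy; have := dotB_le_l1 x y c_le1; lra.
Qed.

Section BestResponseRegion.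
Variables (R : realType) (d : nat) (A Af : finType) (tb : seq Af) (af0 : Af).
Hypothesis tb_enum : perm_eq tb (enum Af).
Variables (K : nat) (uf : 'I_K -> 'rV[R]_d -> A -> Af -> R) (z : 'rV[R]_d).
Variable sigma : 'I_K -> Af.
Hypothesis uf_01 : forall i a b, 0 <= uf i z a b <= 1.

Notation region := (BRregion tb af0 uf z sigma).

(* The closure of a best-response region is the polytope cut out by
   [x a >= 0] and by [sigma i] being a weak best response of every type [i]. *)
Definition br_constraint (j : A + 'I_K * Af) : {ffun A -> R} :=
  match j with
  | inl a => [ffun a' => - (a' == a)%:R]
  | inr (i, b) => [ffun a => uf i z a b - uf i z a (sigma i)]
  end.

Notation br_polytope := (polytope br_constraint).

Lemma dot_br_constraint_inl a (x : {ffun A -> R}) : dot (br_constraint (inl a)) x = - x a.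
Proof.
rewrite /dot (bigD1 a) //= ffunE eqxx mulrN1 big1 ?addr0 // => a' /negPf neq_a'.
by rewrite ffunE neq_a' oppr0 mulr0.
Qed.

Lemma dot_br_constraint_inr i b (x : {ffun A -> R}) :
  dot (br_constraint (inr (i, b))) x = Uexp (uf i) z x b - Uexp (uf i) z x (sigma i).
Proof. by rewrite /dot /Uexp -sumrB; apply: eq_bigr => a _; rewrite ffunE mulrBr. Qed.

Lemma br_constraint_le1 j a : `|br_constraint j a| <= 1.
Proof.
case: j => [a'|[i b]]; rewrite /= ffunE; first by case: (a == a'); rewrite ?normrN ?normr0 ?normr1.
by have := uf_01 i a b; have := uf_01 i a (sigma i); rewrite ler_norml; lra.
Qed.

Lemma br_polytopeP (x : {ffun A -> R}) : br_polytope x <->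
  mixed x /\ forall i b, Uexp (uf i) z x b <= Uexp (uf i) z x (sigma i).
Proof.
split=> [[sum_x Px]|[[x_ge0 sum_x] x_br]].
  split; first by split=> // a; have := Px (inl a); rewrite dot_br_constraint_inl oppr_le0.
  by move=> i b; have := Px (inr (i, b)); rewrite dot_br_constraint_inr subr_le0.
split=> // [[a|[i b]]]; first by rewrite dot_br_constraint_inl oppr_le0.
by rewrite dot_br_constraint_inr subr_le0.
Qed.

Lemma br_polytope_bounded (v : {ffun A -> R}) :
  \sum_a v a = 0 -> v != 0 -> exists j, 0 < dot (br_constraint j) v.
Proof.
move=> sum_v; apply: contraNP => no_j; apply/eqP/ffunP => a; rewrite ffunE.
have v_ge0 a' : 0 <= v a'.
  by rewrite leNgt -oppr_gt0 -dot_br_constraint_inl; apply/negP => ?; apply: no_j; exists (inl a').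
by apply: (psumr_eq0P (fun a' _ => v_ge0 a') sum_v).
Qed.

Lemma region_sub_polytope (x : {ffun A -> R}) : region x -> br_polytope x.
Proof. by move=> [mx x_br]; apply/br_polytopeP; split=> // i b; rewrite -(x_br i) br_max. Qed.

Lemma closure_region_sub_polytope (x : {ffun A -> R}) : closure_l1 region x -> br_polytope x.
Proof.
have dot_cst r y : dot [ffun=> r] y = (\sum_a y a) * r.
  by rewrite big_distrl; apply: eq_bigr => a _; rewrite ffunE.
have cst_le1 r : `|r| <= 1 -> forall a, `|([ffun=> r] : {ffun A -> R}) a| <= 1.
  by move=> ? a; rewrite ffunE.
have sum_region r y : region y -> dot [ffun=> r] y <= r.
  by case=> -[_ sum_y] _; rewrite dot_cst sum_y mul1r.
move=> cl_x; split; last first.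
  move=> j; apply: closure_l1_dot_le cl_x => [|y /region_sub_polytope[_ ->] //].
  exact: br_constraint_le1.
have := closure_l1_dot_le (cst_le1 1 _) (sum_region 1) cl_x.
have := closure_l1_dot_le (cst_le1 (-1) _) (sum_region (-1)) cl_x.
rewrite !dot_cst normrN normr1 lexx; lra.
Qed.

(* Tie-breaking is respected on the half-open segment from [q] to [p]: there
   [p] makes every type strictly prefer [sigma i] to the earlier actions. *)
Lemma region_segment (p q x : {ffun A -> R}) lam : region p -> br_polytope q -> 0 < lam <= 1 ->
  (forall a, x a = (1 - lam) * q a + lam * p a) -> region x.
Proof.
move=> [[p_ge0 sum_p] p_br] /br_polytopeP[[q_ge0 sum_q] q_br] /andP[lam_gt0 lam_le1] ex.
have lam_ge0 := ltW lam_gt0; have lam'_ge0 : 0 <= 1 - lam by rewrite subr_ge0.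
split; first split.
- by move=> a; rewrite ex addr_ge0 ?mulr_ge0.
- by rewrite sum_dot1 (dot_comb _ ex) -!sum_dot1 sum_q sum_p; ring.
move=> i; have p_max b : Uexp (uf i) z p b <= Uexp (uf i) z p (sigma i).
  by rewrite -(p_br i) br_max.
have p_before b : (index b tb < index (sigma i) tb)%N ->
    Uexp (uf i) z p b < Uexp (uf i) z p (sigma i).
  by rewrite -(p_br i); apply: before_br.
rewrite /br; apply: head_filter_eq; first by rewrite (perm_mem tb_enum) mem_enum.
  by apply/forallP => b; rewrite !(Uexp_comb _ _ _ ex) lerD ?ler_wpM2l ?p_max ?q_br.
move=> b /p_before lt_b; apply/forallPn; exists (sigma i).
by rewrite -ltNge !(Uexp_comb _ _ _ ex) ler_ltD ?ler_wpM2l ?ltr_pM2l ?q_br.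
Qed.

Lemma polytope_sub_closure_region (p q : {ffun A -> R}) :
  region p -> br_polytope q -> closure_l1 region q.
Proof.
move=> Rp Pq e e_gt0; have D_ge0 : 0 <= l1 q p by rewrite sumr_ge0.
pose lam := e / (e + l1 q p + 1).
have lam_gt0 : 0 < lam by rewrite divr_gt0 //; lra.
have lam_lt1 : lam < 1 by rewrite ltr_pdivrMr ?mul1r; lra.
pose x : {ffun A -> R} := [ffun a => (1 - lam) * q a + lam * p a].
exists x; split.
  by apply: (@region_segment p q x lam Rp Pq) => [|a]; rewrite ?ffunE ?lam_gt0 ?ltW.
have -> : l1 q x = lam * l1 q p.
  rewrite /l1 big_distrr; apply: eq_bigr => a _; rewrite ffunE.
  have -> : q a - ((1 - lam) * q a + lam * p a) = lam * (q a - p a) by ring.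
  by rewrite normrM gtr0_norm.
by rewrite /lam mulrAC ltr_pdivrMr; nra.
Qed.

Lemma extreme_point_closure_region (p x : {ffun A -> R}) : region p ->
  extreme_point br_polytope x -> extreme_point (closure_l1 region) x.
Proof.
move=> Rp [Px ext_x]; split; first exact: polytope_sub_closure_region Rp Px.
by move=> y w t /closure_region_sub_polytope Py /closure_region_sub_polytope Pw; apply: ext_x.
Qed.

End BestResponseRegion.

Section GreedyRound.
Variables (R : realType) (d : nat) (A Af : finType) (tb : seq Af) (af0 : Af).
Hypothesis tb_enum : perm_eq tb (enum Af).
Variables (K : nat) (uf : 'I_K -> 'rV[R]_d -> A -> Af -> R) (u : 'rV[R]_d -> A -> Af -> R).
Variables (z : 'rV[R]_d) (F : 'I_K -> R) (E : seq {ffun A -> R}) (delta : R).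
Hypothesis u_01 : forall a b, 0 <= u z a b <= 1.
Hypothesis uf_01 : forall i a b, 0 <= uf i z a b <= 1.
Hypothesis E_mixed : forall x, x \in E -> mixed x.
Hypothesis E_approx : approx_extreme_points tb af0 uf delta z E.
Hypothesis F_ge0 : forall i, 0 <= F i.
Hypothesis F_sum1 : \sum_i F i = 1.

Notation exp_val := (exp_val tb af0 uf u F z).
Notation greedy_obj h := (greedy_obj tb af0 uf u h z).

Lemma Uexp_01 (x : {ffun A -> R}) b : mixed x -> 0 <= Uexp u z x b <= 1.
Proof.
move=> [x_ge0 sum_x]; apply/andP; split.
  by apply: sumr_ge0 => a _; rewrite mulr_ge0 //; case/andP: (u_01 a b).
by rewrite -sum_x; apply: ler_sum => a _; rewrite ler_piMr //; case/andP: (u_01 a b).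
Qed.

(* On the region of the best responses to [p], [exp_val] is the linear map
   [dot L]; maximise it over the closure of that region at an extreme point. *)
Lemma exists_near_optimal_in_E (p : {ffun A -> R}) m : mixed p -> 0 <= m -> delta <= m ->
  exists2 x, x \in E & exp_val p <= exp_val x + m.
Proof.
move=> mixed_p m_ge0 delta_le_m; pose sigma i := br tb af0 (uf i) z p.
have Rp : BRregion tb af0 uf z sigma p by [].
pose L : {ffun A -> R} := [ffun a => \sum_i F i * u z a (sigma i)].
have exp_valE x : BRregion tb af0 uf z sigma x -> exp_val x = dot L x.
  move=> [_ x_br]; rewrite /exp_val /dot; under [RHS]eq_bigr do rewrite ffunE big_distrr.
  rewrite exchange_big; apply: eq_bigr => i _; rewrite x_br /Uexp big_distrr.
  by apply: eq_bigr => a _ /=; rewrite mulrCA.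
have L_le1 a : `|L a| <= 1.
  have u_ge0 i : 0 <= F i * u z a (sigma i) by rewrite mulr_ge0 //; case/andP: (u_01 a (sigma i)).
  rewrite ffunE ger0_norm ?sumr_ge0 // -F_sum1; apply: ler_sum => i _.
  by rewrite ler_piMr //; case/andP: (u_01 a (sigma i)).
have [xe [ext_xe le_xe]] :=
  exists_extreme_point_ge (br_polytope_bounded uf z sigma) L (region_sub_polytope tb_enum Rp).
have ext_cl := extreme_point_closure_region tb_enum uf_01 Rp ext_xe.
have [[R_xe xe_E]|[x [x_E R_x le_delta]]] := E_approx (ex_intro _ p Rp) ext_cl.
  by exists xe; rewrite // (exp_valE _ Rp) (exp_valE _ R_xe) ler_wpDr.
exists x; rewrite // (exp_valE _ Rp) (exp_valE _ R_x).
by have := dotB_le_l1 xe x L_le1; rewrite l1C; lra.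
Qed.

Lemma exp_val_greedy_obj_dev h (x : {ffun A -> R}) : mixed x ->
  `|exp_val x - greedy_obj h x| <= \sum_i `|phat R h i - F i|.
Proof.
move=> mixed_x; rewrite /exp_val /Defs.greedy_obj -sumrB (le_trans (ler_norm_sum _ _ _)) //.
apply: ler_sum => i _; rewrite -mulrBl normrM distrC ler_piMr //.
by have /andP[U_ge0 U_le1] := Uexp_01 (br tb af0 (uf i) z x) mixed_x; rewrite ger0_norm.
Qed.

Lemma greedy_round_gap h (p x : {ffun A -> R}) m : mixed p -> x \in E ->
  (forall y, y \in E -> greedy_obj h y <= greedy_obj h x) -> 0 <= m -> delta <= m ->
  exp_val p - exp_val x <= m + 2 * \sum_i `|phat R h i - F i|.
Proof.
move=> mixed_p x_E x_opt m_ge0 delta_le_m.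
have [y y_E le_py] := exists_near_optimal_in_E mixed_p m_ge0 delta_le_m.
have := exp_val_greedy_obj_dev h (E_mixed y_E); have := exp_val_greedy_obj_dev h (E_mixed x_E).
have := x_opt y y_E; rewrite !ler_norml; lra.
Qed.

End GreedyRound.

Section RegretDecomposition.
Variables (R : realType) (d : nat) (A Af : finType) (tb : seq Af) (af0 : Af).
Variables (K : nat) (uf : 'I_K -> 'rV[R]_d -> A -> Af -> R) (u : 'rV[R]_d -> A -> Af -> R).
Variables (F : 'I_K -> R) (alg : seq 'I_K -> 'rV[R]_d -> {ffun A -> R}).
Variables (adv : seq 'I_K -> 'rV[R]_d) (pistar : 'rV[R]_d -> {ffun A -> R}).
Hypothesis F_sum1 : \sum_i F i = 1.

Definition round_gap (h : seq 'I_K) : R :=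
  exp_val tb af0 uf u F (adv h) (pistar (adv h)) -
  exp_val tb af0 uf u F (adv h) (alg h (adv h)).

Lemma expected_regretE T :
  expected_regret tb af0 uf T F u alg adv pistar = \sum_(t < T) iid_mean F t round_gap.
Proof.
have [i0 _] : exists i, 0 < F i.
  apply: contrapT => /forallNP F_le0; have : \sum_i F i <= 0.
    by rewrite sumr_le0 // => i _; rewrite leNgt; apply/negP/F_le0.
  by rewrite F_sum1 ler10.
rewrite /expected_regret /regret; under eq_bigr do rewrite big_distrr.
rewrite exchange_big; apply: eq_bigr => t _ /=.
pose D h f := let z := adv h in
  Uexp u z (pistar z) (br tb af0 (uf f) z (pistar z)) -
  Uexp u z (alg h z) (br tb af0 (uf f) z (alg h z)).
transitivity (iid_mean F T (fun s => D (take t s) (nth i0 s t))).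
  by apply: eq_bigr => s _; rewrite (tnth_nth i0).
rewrite (iid_mean_nth F_sum1 i0 D (ltn_ord t)); apply: eq_iid_mean => s.
by rewrite /round_gap /exp_val -sumrB; apply: eq_bigr => i _; rewrite mulrBr.
Qed.

End RegretDecomposition.

Section LogBounds.
Variable R : realType.

Lemma ln_nat_ge_half n : (2 <= n)%N -> 1 / 2 <= ln (n%:R : R).
Proof.
move=> n_ge2; apply: le_trans (_ : ln 2 <= _).
  have half : 1 - 1 / 2 = 2^-1 :> R by field.
  have : -1 < - (1 / 2) :> R by lra.
  by move/le_ln1Dx; rewrite half lnV ?posrE //; lra.
by rewrite ler_ln ?posrE ?ler_nat ?ltr0n // (leq_trans _ n_ge2).
Qed.

Lemma harmonic_le_ln n : (0 < n)%N -> \sum_(t < n.+1) (t%:R : R)^-1 <= 1 + ln n%:R.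
Proof.
elim: n => // -[_|n IHn _]; first by rewrite !big_ord_recr big_ord0 /= invr0 ln1 invr1 !add0r addr0.
rewrite big_ord_recr /= (le_trans (lerD (IHn isT) (lexx _))) // -addrA lerD2l.
have n1_gt0 : (0 : R) < n.+1%:R by rewrite ltr0n.
have := @le_ln1Dx R (- n.+2%:R^-1); rewrite ltrN2 invf_lt1 ?ltr0n ?ltr1n // => /(_ isT).
rewrite (_ : 1 - n.+2%:R^-1 = n.+1%:R / n.+2%:R :> R); last by field; rewrite -natrD pnatr_eq0.
(* [lra] must see the inverse as an atom. *)
by rewrite ln_div ?posrE ?ltr0n //; set c := n.+2%:R^-1; lra.
Qed.

End LogBounds.

Section GreedyRegret.
Variables (R : realType) (d : nat) (A Af : finType) (tb : seq Af) (af0 : Af) (K : nat).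
Variables (Zs : 'rV[R]_d -> Prop) (u : 'rV[R]_d -> A -> Af -> R).
Variables (uf : 'I_K -> 'rV[R]_d -> A -> Af -> R) (delta : R) (E : 'rV[R]_d -> seq {ffun A -> R}).
Variables (F : 'I_K -> R) (alg : seq 'I_K -> 'rV[R]_d -> {ffun A -> R}).
Variables (adv : seq 'I_K -> 'rV[R]_d) (pistar : 'rV[R]_d -> {ffun A -> R}).
Hypothesis tb_enum : perm_eq tb (enum Af).
Hypothesis u_01 : forall z a b, Zs z -> 0 <= u z a b <= 1.
Hypothesis uf_01 : forall i z a b, Zs z -> 0 <= uf i z a b <= 1.
Hypothesis E_mixed : forall z, Zs z -> forall x, x \in E z -> mixed x.
Hypothesis E_approx : forall z, Zs z -> approx_extreme_points tb af0 uf delta z (E z).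
Hypothesis F_ge0 : forall i, 0 <= F i.
Hypothesis F_sum1 : \sum_i F i = 1.
Hypothesis adv_Zs : forall h, Zs (adv h).
Hypothesis alg_greedy : forall h z, Zs z ->
  alg h z \in E z /\
  forall y, y \in E z -> greedy_obj tb af0 uf u h z y <= greedy_obj tb af0 uf u h z (alg h z).
Hypothesis pistar_mixed : forall z, Zs z -> mixed (pistar z).
Variable m : R.
Hypotheses (m_ge0 : 0 <= m) (delta_le_m : delta <= m).

Notation round_gap := (round_gap tb af0 uf u F alg adv pistar).

Lemma round_gap_le h : round_gap h <= m + 2 * \sum_i `|phat R h i - F i|.
Proof.
have Z := adv_Zs h; have [alg_E alg_opt] := alg_greedy h Z.
exact: (greedy_round_gap tb_enum (fun a b => u_01 a b Z) (fun i a b => uf_01 i a b Z)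
  (E_mixed Z) (E_approx Z) F_ge0 F_sum1 (pistar_mixed Z) alg_E alg_opt m_ge0 delta_le_m).
Qed.

Lemma iid_mean_round_gap_le t eps : 0 < eps ->
  iid_mean F t round_gap <= m + 4 * (t == 0)%:R + t%:R^-1 / eps + K%:R * eps.
Proof.
move=> eps_gt0; apply: le_trans (_ : _ <= iid_mean F t
  (fun h => m + 2 * \sum_i `|phat R h i - F i|)) _; first exact: ler_iid_mean round_gap_le.
rewrite iid_meanD iid_mean_cst // iid_meanZ.
have := iid_mean_phat_l1_dev F_ge0 F_sum1 t eps_gt0; lra.
Qed.

Lemma greedy_expected_regret_le T eps : 0 < eps ->
  expected_regret tb af0 uf T F u alg adv pistar <=
  T%:R * m + 4 + (\sum_(t < T) t%:R^-1) / eps + T%:R * (K%:R * eps).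
Proof.
move=> eps_gt0; rewrite expected_regretE //.
apply: (@le_trans _ _ (\sum_(t < T) (m + 4 * (t == 0 :> nat)%:R + t%:R^-1 / eps + K%:R * eps))).
  by apply: ler_sum => t _; apply: iid_mean_round_gap_le.
rewrite !big_split /= -big_distrr -big_distrl /= !sumr_const card_ord.
rewrite -[m *+ T]mulr_natl -[(K%:R * eps) *+ T]mulr_natl.
have : \sum_(t < T) ((t == 0 :> nat)%:R : R) <= 1.
  by case: T => [|T]; rewrite ?big_ord0 // big_ord_recl big1 ?addr0 // => t; rewrite lift0.
lra.
Qed.

End GreedyRegret.

Lemma regret_budget_le (R : realType) (T K : nat) (s : R) : (2 <= T)%N -> (0 < K)%N ->
  0 <= s -> s ^+ 2 = T%:R * ln T%:R ->
  T%:R * T%:R^-1 + 4 + (\sum_(t < T) (t%:R : R)^-1) / (s / T%:R) + T%:R * (K%:R * (s / T%:R))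
    <= 9 * K%:R * s.
Proof.
move=> T_ge2 K_gt0 s_ge0 s2; have T_gt0 : (0 : R) < T%:R by rewrite ltr0n (leq_trans _ T_ge2).
have K_ge1 : (1 : R) <= K%:R by rewrite ler1n.
have ln_ge := ln_nat_ge_half R T_ge2.
have s_ge1 : 1 <= s.
  have : (2 : R) <= T%:R by rewrite ler_nat.
  nra.
have H_le : \sum_(t < T) (t%:R : R)^-1 <= 1 + ln T%:R.
  rewrite (le_trans _ (harmonic_le_ln R (leq_trans _ T_ge2))) // big_ord_recr /=.
  by rewrite lerDl invr_ge0.
have H_div_le : (\sum_(t < T) (t%:R : R)^-1) / (s / T%:R) <= 3 * s.
  rewrite invf_div mulrA ler_pdivrMr ?(lt_le_trans ltr01) // -mulrA -expr2 s2.
  have := ler_wpM2r (ltW T_gt0) H_le; nra.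
have -> : T%:R * T%:R^-1 = 1 :> R by rewrite divff ?gt_eqF.
have -> : T%:R * (K%:R * (s / T%:R)) = K%:R * s :> R by field; rewrite gt_eqF.
nra.
Qed.

Theorem mainTheorem4 (R : realType) :
  exists C : R, 0 < C /\ exists T0 : nat,
  forall (d : nat) (A Af : finType) (tb : seq Af) (af0 : Af) (K : nat)
    (Zs : 'rV[R]_d -> Prop)
    (u : 'rV[R]_d -> A -> Af -> R) (uf : 'I_K -> 'rV[R]_d -> A -> Af -> R)
    (T : nat) (delta : R) (E : 'rV[R]_d -> seq {ffun A -> R})
    (F : 'I_K -> R)
    (alg : seq 'I_K -> 'rV[R]_d -> {ffun A -> R})
    (adv : seq 'I_K -> 'rV[R]_d)
    (pistar : 'rV[R]_d -> {ffun A -> R}),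
  perm_eq tb (enum Af) ->
  (0 < K)%N -> (K <= T)%N -> (T0 <= T)%N ->
  (forall z a b, Zs z -> 0 <= u z a b <= 1) ->
  (forall i z a b, Zs z -> 0 <= uf i z a b <= 1) ->
  delta <= (T%:R)^-1 ->
  (forall z, Zs z -> forall x, x \in E z -> mixed x) ->
  (forall z, Zs z -> approx_extreme_points tb af0 uf delta z (E z)) ->
  (forall i, 0 <= F i) -> \sum_(i < K) F i = 1 ->
  (forall h, Zs (adv h)) ->
  (forall h z, Zs z ->
     alg h z \in E z /\
     forall y, y \in E z -> greedy_obj tb af0 uf u h z y <= greedy_obj tb af0 uf u h z (alg h z)) ->
  (forall z, Zs z ->
     mixed (pistar z) /\
     forall x, mixed x -> exp_val tb af0 uf u F z x <= exp_val tb af0 uf u F z (pistar z)) ->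
  expected_regret tb af0 uf T F u alg adv pistar
    <= C * K%:R * Num.sqrt (T%:R * ln (T%:R)).
Proof.
exists 9; split => //; exists 2%N.
move=> d A Af tb af0 K Zs u uf T delta E F alg adv pistar tb_enum K_gt0 _ T_ge2 u_01 uf_01
  delta_le E_mixed E_approx F_ge0 F_sum1 adv_Zs alg_greedy pistar_opt.
have T_gt0 : (0 : R) < T%:R by rewrite ltr0n (leq_trans _ T_ge2).
have Tln_gt0 : 0 < T%:R * ln (T%:R : R).
  by have := ln_nat_ge_half R T_ge2; nra.
have Tinv_ge0 : 0 <= T%:R^-1 :> R by rewrite invr_ge0 ltW.
set s := Num.sqrt _; have s_gt0 : 0 < s by rewrite sqrtr_gt0.
apply: le_trans (greedy_expected_regret_le tb_enum u_01 uf_01 E_mixed E_approx F_ge0 F_sum1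
  adv_Zs alg_greedy (fun z Zz => (pistar_opt z Zz).1) Tinv_ge0 delta_le T
  (divr_gt0 s_gt0 T_gt0)) _.
by apply: regret_budget_le; rewrite ?sqr_sqrtr ?ltW.
Qed.
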